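(* Let $(G,r,k,c,\pi)$ be an instance of $k$-PCST with optimal value $\mathrm{OPT}$, and run the algorithm $\mathcal{A}$ described below on it. If $\mathcal{A}$ terminates at Step 1, then its output $F_{\mathrm{OUT}}=(V_{\mathrm{OUT}},E_{\mathrm{OUT}})$ is a feasible solution of the $k$-PCST instance and satisfies \[ \sum_{e\in E_{\mathrm{OUT}}}c(e)+\sum_{v\notin V_{\mathrm{OUT}}}\pi(v)\le 2\,\mathrm{OPT}. \]
   Context: An instance of $k$-PCST consists of an undirected connected graph $G=(V,E)$, a root $r\in V$, an integer $k$, a nonnegative edge cost $c:E\to\mathbb{R}_+$ and a nonnegative penalty $\pi:V\to\mathbb{R}_+$. A feasible solution is a subtree $F=(V_F,E_F)$ of $G$ with $r\in V_F$ and $|V_F|\ge k$, of cost $\sum_{e\in E_F}c(e)+\sum_{v\in V\setminus V_F}\pi(v)$; $\mathrm{OPT}$ is the minimum cost. The PCST instance $(G,r,c,\pi)$ is the same problem without the constraint $|V_F|\ge k$; the rooted $k$-MST instance $(G,r,k,c)$ asks for a subtree containing $r$ with at least $k$ vertices minimizing total edge cost. Procedure 1 is the Goemans–Williamson primal-dual algorithm for PCST, which returns a subtree $F=(V_F,E_F)$ containing $r$ whose PCST cost is at most $2$ times the optimal PCST value. Procedure 2 is Garg's primal-dual algorithm for rooted $k$-MST, which returns a subtree containing $r$ with at least $k$ vertices whose edge cost is at most $2$ times the optimal rooted $k$-MST value. Algorithm $\mathcal{A}$: Step 1: apply Procedure 1 to $(G,r,c,\pi)$ obtaining $F_{\mathrm{PCST}}=(V_{\mathrm{PCST}},E_{\mathrm{PCST}})$;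 if $|V_{\mathrm{PCST}}|\ge k$, return $F_{\mathrm{PCST}}$ (termination at Step 1); otherwise go to Step 2. Step 2: apply Procedure 2 to $(G,r,k,c)$ obtaining $F_{k\text{-MST}}=(V_{k\text{-MST}},E_{k\text{-MST}})$. Step 3: form the graph $G'=(V_{\mathrm{PCST}}\cup V_{k\text{-MST}},E_{\mathrm{PCST}}\cup E_{k\text{-MST}})$, compute a minimum spanning tree $F_{\mathrm{OUT}}$ of $G'$ with respect to $c$, and return it. *)

From mathcomp Require Import all_boot all_order all_algebra.
Set Implicit Arguments. Unset Strict Implicit. Unset Printing Implicit Defensive.
Import Order.TTheory GRing.Theory Num.Theory.
Local Open Scope ring_scope.

(* An undirected (multi)graph G = (V, E): vertices form a finType V, edges a
   finType E, and each edge e has endpoints eu e and ev e. *)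

Section Graph.
Variables (V E : finType) (eu ev : E -> V).

Definition adj (EF : {set E}) : rel V :=
  fun x y => [exists e in EF, ((eu e == x) && (ev e == y)) || ((eu e == y) && (ev e == x))].

Definition subgraph (VF : {set V}) (EF : {set E}) : Prop :=
  forall e, e \in EF -> (eu e \in VF) /\ (ev e \in VF).

Definition connected_on (VF : {set V}) (EF : {set E}) : Prop :=
  forall x y, x \in VF -> y \in VF -> connect (adj EF) x y.

Definition subtree (VF : {set V}) (EF : {set E}) : Prop :=
  [/\ VF != set0, subgraph VF EF, connected_on VF EF & #|EF| = (#|VF| - 1)%N].

Definition graph_connected : Prop := connected_on [set: V] [set: E].

Variable R : realFieldType.

Definition pcst_cost (c : E -> R) (pi : V -> R) (VF : {set V}) (EF : {set E}) : R :=
  \sum_(e in EF) c e + \sum_(v in ~: VF) pi v.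

Definition pcst_feasible (r : V) (VF : {set V}) (EF : {set E}) : Prop :=
  subtree VF EF /\ r \in VF.

Definition kpcst_feasible (r : V) (k : nat) (VF : {set V}) (EF : {set E}) : Prop :=
  [/\ subtree VF EF, r \in VF & (k <= #|VF|)%N].

End Graph.

From mathcomp Require Import all_boot all_order all_algebra.
Import Order.TTheory GRing.Theory Num.Theory.
Local Open Scope ring_scope.

Section Feasibility.
Variables (V E : finType) (eu ev : E -> V) (r : V) (k : nat).

Lemma kpcst_feasibleP (VF : {set V}) (EF : {set E}) :
  kpcst_feasible eu ev r k VF EF <->
  pcst_feasible eu ev r VF EF /\ (k <= #|VF|)%N.
Proof. by split=> [[? ? ?] | [[? ?] ?]]. Qed.

Lemma kpcst_feasible_pcst (VF : {set V}) (EF : {set E}) :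
  kpcst_feasible eu ev r k VF EF -> pcst_feasible eu ev r VF EF.
Proof. by case/kpcst_feasibleP. Qed.

End Feasibility.

(* (VP, EP) is the output F_PCST of Procedure 1 (Goemans–Williamson): a
   feasible PCST solution whose PCST cost is at most 2 times that of every
   feasible PCST solution (i.e. at most 2 * OPT_PCST).  Termination at Step 1
   means k <= |VP|, and then F_OUT = (VP, EP). *)
Theorem lemma3 (R : realFieldType) (V E : finType) (eu ev : E -> V)
    (r : V) (k : nat) (c : E -> R) (pi : V -> R)
    (hG : graph_connected eu ev)
    (hc : forall e, 0 <= c e) (hpi : forall v, 0 <= pi v)
    (VP : {set V}) (EP : {set E})
    (hproc1_feas : pcst_feasible eu ev r VP EP)
    (hproc1_apx : forall (VF : {set V}) (EF : {set E}),
        pcst_feasible eu ev r VF EF ->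
        pcst_cost c pi VP EP <= 2 * pcst_cost c pi VF EF)
    (hstep1 : (k <= #|VP|)%N) :
  kpcst_feasible eu ev r k VP EP /\
  (forall (VF : {set V}) (EF : {set E}),
      kpcst_feasible eu ev r k VF EF ->
      pcst_cost c pi VP EP <= 2 * pcst_cost c pi VF EF).
Proof.
split; first exact/kpcst_feasibleP.
by move=> VF EF /kpcst_feasible_pcst; apply: hproc1_apx.
Qed.
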